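(* Let $\{(X_i,Y_i)\}_{i=1}^n$ be i.i.d. from a distribution $P$ and let the test point $(X_{n+1},Y_{n+1})$ be drawn from a distribution $Q$ independently of the labeled data, where $\mathrm{d}Q/\mathrm{d}P(x,y) = w(x)$ for a known weight function $w\colon \mathcal{X}\to \mathbb{R}^+$. Let $f$ be a model and $s\colon\mathcal{X}\to\mathbb{R}$ a score function, both fixed (trained independently of these data), and let $L_i = \mathcal{L}(f,X_i,Y_i)\in[0,1]$ for a known risk mapping $\mathcal{L}$, for $i\in[n+1]$. Write $w_i = w(X_i)$ for $i\in[n+1]$ and $\mathcal{M} = \{s(X_i)\}_{i=1}^{n+1}$. For $\ell\in[0,1]$ and $t\in\mathbb{R}$ define $$\mathrm{F}(t;\ell) = \frac{\sum_{i=1}^n w_i L_i \mathbf{1}\{s(X_i)\le t\} + w_{n+1}\,\ell\, \mathbf{1}\{s(X_{n+1})\le t\}}{\sum_{i=1}^{n+1} w_i},\qquad t_\gamma(\ell) = \max\{t\in\mathcal{M}\colon \mathrm{F}(t;\ell)\le\gamma\},$$ with $\max\emptyset = -\infty$, and define the weighted e-value $$E_{\gamma,n+1} = \inf_{\ell\in[0,1]} \left\{ \frac{\mathbf{1}\{s(X_{n+1})\le t_\gamma(\ell)\}\cdot \sum_{i=1}^{n+1} w_i}{\sum_{i=1}^n w_i L_i \mathbf{1}\{s(X_i)\le t_\gamma(\ell)\} + w_{n+1}\,\ell\,\mathbf{1}\{s(X_{n+1})\le t_\gamma(\ell)\}}\right\},$$ with $E_{\gamma,n+1}=0$ when $\inf_{\ell\in[0,1]}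 t_\gamma(\ell) = -\infty$. Then for any fixed constant $\gamma\in(0,1)$, it holds that $\mathbb{E}_Q[L_{n+1}E_{\gamma,n+1}]\le 1$.
   Context: Covariate-shift setting: calibration data i.i.d. from $P$, test data from $Q$ with $\mathrm{d}Q/\mathrm{d}P(x,y)=w(x)$ known. The weighted e-value is used for marginal deployment risk control via the decision $\hat\psi_{n+1}=\mathbf{1}\{E_{\gamma,n+1}\ge 1/\alpha\}$, so that the validity $\mathbb{E}_Q[L_{n+1}E_{\gamma,n+1}]\le 1$ yields $\mathbb{E}_Q[L_{n+1}\hat\psi_{n+1}]\le\alpha$. *)

From HB Require Import structures.
From mathcomp Require Import all_boot all_order all_algebra.
From mathcomp Require Import all_classical all_reals all_analysis.
Set Implicit Arguments. Unset Strict Implicit. Unset Printing Implicit Defensive.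
Import Order.TTheory GRing.Theory Num.Theory.
Local Open Scope classical_set_scope.
Local Open Scope ring_scope.

Section WeightedEvalue.
Context {R : realType} {d1 d2 : measure_display}
  {X : measurableType d1} {Y : measurableType d2}.
Variables (w : X -> R) (s : X -> R) (loss : X -> Y -> R) (gamma : R)
  (n : nat) (zc : 'I_n -> X * Y) (zt : X * Y).

Definition Lc (i : 'I_n) : R := loss (zc i).1 (zc i).2.
Definition wc (i : 'I_n) : R := w (zc i).1.
Definition wt : R := w zt.1.
Definition wsum : R := \sum_(i < n) wc i + wt.
Definition ind (x : X) (t : \bar R) : R := if ((s x)%:E <= t)%E then 1 else 0.
Definition numer (t : \bar R) (l : R) : R :=
  \sum_(i < n) wc i * Lc i * ind (zc i).1 t + wt * l * ind zt.1 t.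
Definition Fw (t : \bar R) (l : R) : R := numer t l / wsum.
Definition Mset : set R := [set s (zc i).1 | i in [set: 'I_n]] `|` [set s zt.1].
(* t_gamma(l) = max {t in M : F(t;l) <= gamma}, max of empty set = -oo
   (a sup over a finite set, i.e. the max) *)
Definition t_gamma (l : R) : \bar R :=
  ereal_sup [set t%:E | t in [set t | Mset t /\ Fw t%:E l <= gamma]].
(* the term inside the infimum; x/0 = +oo for x > 0, and the term is 0
   when the indicator 1{s(X_{n+1}) <= t_gamma(l)} vanishes *)
Definition eterm (l : R) : \bar R :=
  if ((s zt.1)%:E <= t_gamma l)%E then
    (if numer (t_gamma l) l == 0 then +oo%E
     else (wsum / numer (t_gamma l) l)%:E)
  else 0%E.
Definition unit_interval : set R := [set l | 0 <= l <= 1].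
Definition evalue : \bar R :=
  if ereal_inf [set t_gamma l | l in unit_interval] == -oo%E then 0%E
  else ereal_inf [set eterm l | l in unit_interval].
End WeightedEvalue.

(* Z_0,...,Z_{n-1} (calibration) and Zt (test) mutually independent:
   product rule for every family of measurable events (taking A i = setT
   gives the rule for every subfamily). *)
Definition mutually_independent {R : realType} {dO : measure_display}
  {Omega : measurableType dO} (Pr : probability Omega R)
  {dZ : measure_display} {Z : measurableType dZ}
  (n : nat) (Zc : 'I_n -> Omega -> Z) (Zt : Omega -> Z) : Prop :=
  forall (A : 'I_n -> set Z) (B : set Z),
    (forall i, measurable (A i)) -> measurable B ->
    Pr ((\bigcap_(i in [set: 'I_n]) (Zc i @^-1` A i)) `&` (Zt @^-1` B)) =
    (\prod_(i < n) Pr (Zc i @^-1` A i) * Pr (Zt @^-1` B))%E.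

(* Let z = (Z_{n+1}, Z_1, ..., Z_n) be the full sample, test point first, and let
   T = max {t in M : F(t; L_{n+1}) <= gamma} be the oracle threshold computed with
   the true test loss; T is a symmetric function of z. Evaluating the infimum that
   defines E at l = L_{n+1} gives L_{n+1} E <= W(z) h_0(z), where W = sum_k w_k and
   h_k(z) = L_k 1{s_k <= T} / sum_i w_i L_i 1{s_i <= T}. Since dQ/dP = w, weighting Pr
   by w(Z_j) makes the law of z invariant under swapping the test point with the
   calibration point j, so E[w_j h_0(z)] = E[w_j h_j(z)]. Summing over j,
   E[W h_0] = E[sum_k w_k h_k] <= 1, because sum_k w_k h_k <= 1 pointwise. *)

From HB Require Import structures.
From mathcomp Require Import all_boot all_order all_algebra.
From mathcomp Require Import all_classical all_reals all_analysis.
From mathcomp Require Import measurable_realfun.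
From mathcomp Require Import fingroup perm.
Set Implicit Arguments.
Unset Strict Implicit.
Unset Printing Implicit Defensive.
Import Order.TTheory GRing.Theory Num.Theory.
Local Open Scope classical_set_scope.
Local Open Scope ring_scope.

Section density_measure.
Import HBNNSimple.
Local Open Scope ereal_scope.
Context d (T : measurableType d) (R : realType).
Variables (mu : {measure set T -> \bar R}) (g : T -> R).
Hypotheses (mg : measurable_fun setT g) (g_ge0 : forall x, (0 <= g x)%R).

Definition density_fun (A : set T) := \int[mu]_(x in A) (g x)%:E.

Let density_fun0 : density_fun set0 = 0.
Proof. exact: integral_set0. Qed.

Let density_fun_ge0 A : 0 <= density_fun A.
Proof. by apply: integral_ge0 => x _; rewrite lee_fin. Qed.

Let density_fun_sigma_additive : semi_sigma_additive density_fun.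
Proof.
apply: semi_sigma_additive_nng_induced => [|x]; first exact/measurable_EFinP.
by rewrite lee_fin.
Qed.

HB.instance Definition _ := isMeasure.Build _ _ _ density_fun
  density_fun0 density_fun_ge0 density_fun_sigma_additive.

Definition density_measure : {measure set T -> \bar R} := density_fun.

Lemma density_measureE A : density_measure A = \int[mu]_(x in A) (g x)%:E.
Proof. by []. Qed.

Lemma integral_density_nnsfun (h : {nnsfun T >-> R}) :
  \int[mu]_x ((h x)%:E * (g x)%:E) = \int[density_measure]_x (h x)%:E.
Proof.
have mhg r : measurable_fun setT (fun x => (r * \1_(h @^-1` [set r]) x)%:E * (g x)%:E).
  by apply: emeasurable_funM; apply/measurable_EFinP => //; exact: measurable_funM.
under eq_integral => x _.
  rewrite fimfunE -fsumEFin // ge0_mule_fsuml; last by move=> r; exact: nnfun_muleindic_ge0.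
  over.
under [RHS]eq_integral => x _ do rewrite fimfunE -fsumEFin //.
rewrite ge0_integral_fsum //; last first.
  move=> r x _; apply: mule_ge0; last by rewrite lee_fin.
  by rewrite EFinM; exact: nnfun_muleindic_ge0.
rewrite ge0_integral_fsum //; last 2 first.
- by move=> r; exact/measurable_EFinP/measurable_funM.
- by move=> r x _; rewrite EFinM nnfun_muleindic_ge0.
apply: eq_fsbigr => _ /[!in_setE] -[t _ <-].
rewrite integralZl_indic_nnsfun // integral_indic // setIT.
under eq_integral do rewrite EFinM -muleA.
rewrite ge0_integralZl ?lee_fin //; last first.
- by move=> x _; rewrite mule_ge0 ?lee_fin.
- by apply: emeasurable_funM; exact/measurable_EFinP.
congr (_ * _); rewrite /= /density_fun [RHS]integral_mkcond.
by apply: eq_integral => y _; rewrite epatch_indic /= muleC.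
Qed.

Lemma integral_density f : (forall x, 0 <= f x) -> measurable_fun setT f ->
  \int[mu]_x (f x * (g x)%:E) = \int[density_measure]_x f x.
Proof.
move=> f0 mf; pose h := nnsfun_approx measurableT mf.
have cvg_h x : (EFin \o h n) x @[n --> \oo] --> f x by exact: cvg_nnsfun_approx.
have nd_h x : {homo (fun n => (EFin \o h n) x) : a b / (a <= b)%N >-> a <= b}.
  by move=> a b ab; rewrite lee_fin; exact/lefP/nd_nnsfun_approx.
have mh n : measurable_fun setT (EFin \o h n) by exact/measurable_EFinP.
transitivity (lim (\int[mu]_x ((EFin \o h n) x * (g x)%:E) @[n --> \oo])).
  rewrite -monotone_convergence //; last 3 first.
  - by move=> n; apply: emeasurable_funM => //; exact/measurable_EFinP.
  - by move=> n x _; rewrite mule_ge0 ?lee_fin.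
  - by move=> x _ a b ab; rewrite lee_wpmul2r ?lee_fin //; exact: nd_h.
  apply: eq_integral => x _; apply/esym/cvg_lim => //.
  by apply: cvgeZr => //; exact: cvg_h.
under eq_fun do rewrite integral_density_nnsfun.
rewrite -monotone_convergence //; last 2 first.
- by move=> n x _; rewrite lee_fin.
- by move=> x _; exact: nd_h.
by apply: eq_integral => x _; apply/cvg_lim => //; exact: cvg_h.
Qed.

End density_measure.
Arguments density_measure {d T R} mu {g} mg g_ge0.
Arguments density_measureE {d T R} mu {g} mg g_ge0.
Arguments integral_density {d T R} mu {g} mg g_ge0 {f}.

Lemma ge0_le_integral_nonmeasurable d (T : measurableType d) (R : realType)
    (mu : {measure set T -> \bar R}) (f g : T -> \bar R) :
  (forall x, (0 <= f x)%E) -> (forall x, (f x <= g x)%E) ->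
  (\int[mu]_x f x <= \int[mu]_x g x)%E.
Proof.
move=> f0 fg; have g0 x : (0 <= g x)%E := le_trans (f0 x) (fg x).
rewrite !ge0_integralTE //; apply: le_ereal_sup => _ [h hf <-].
by exists h => // x; exact: le_trans (hf x) (fg x).
Qed.

Lemma measurable_preimage d d' (T : measurableType d) (V : measurableType d')
    (f : T -> V) (B : set V) :
  measurable_fun setT f -> measurable B -> measurable (f @^-1` B).
Proof. by move=> mf mB; rewrite -[X in measurable X]setTI; exact: mf. Qed.

Lemma eq_integral_pushforward d dV (T : measurableType d) (V : measurableType dV)
    (R : realType) (mu : {measure set T -> \bar R}) (F1 F2 : T -> V) :
  measurable_fun setT F1 -> measurable_fun setT F2 ->
  (forall A, measurable A -> mu (F1 @^-1` A) = mu (F2 @^-1` A)) ->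
  forall f : V -> \bar R, (forall y, (0 <= f y)%E) -> measurable_fun setT f ->
  (\int[mu]_x f (F1 x) = \int[mu]_x f (F2 x))%E.
Proof.
move=> mF1 mF2 eqF f f0 mf.
have <- := ge0_integral_pushforward mF1 mu measurableT mf (fun y _ => f0 y).
have <- := ge0_integral_pushforward mF2 mu measurableT mf (fun y _ => f0 y).
by apply: eq_measure_integral => A mA _; exact: eqF.
Qed.

Lemma integral_indep_event_indic d dV (T : measurableType d) (V : measurableType dV)
    (R : realType) (Pr : probability T R) (P : {measure set V -> \bar R})
    (Z : T -> V) (E : set T) :
  measurable_fun setT Z -> measurable E ->
  (forall C, measurable C -> Pr (Z @^-1` C `&` E) = (P C * Pr E)%E) ->
  forall f : V -> \bar R, (forall y, (0 <= f y)%E) -> measurable_fun setT f ->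
  (\int[Pr]_x (f (Z x) * (\1_E x)%:E) = Pr E * \int[P]_y f y)%E.
Proof.
move=> mZ mE indepZE f f0 mf.
have PrE_ge0 : (0 <= fine (Pr E))%R by apply: fine_ge0.
have finPrE : Pr E \is a fin_num by exact: fin_num_measure.
have mE1 : measurable_fun setT (\1_E : T -> R) by exact: measurable_indic.
have E1_ge0 x : (0 <= \1_E x :> R)%R by rewrite indicE; case: (_ \in _).
rewrite (integral_density Pr mE1 E1_ge0); last 2 first.
- by move=> x; exact: f0.
- exact: measurableT_comp mf mZ.
(* Under the measure with density 1_E, Z has law Pr E * P. *)
have := ge0_integral_pushforward mZ
  (density_measure Pr mE1 E1_ge0) measurableT mf (fun y _ => f0 y).
rewrite preimage_setT => <-.
rewrite [LHS](eq_measure_integral (mscale (NngNum PrE_ge0) P)); last first.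
  move=> C mC _.
  transitivity (density_measure Pr mE1 E1_ge0 (Z @^-1` C)); first by [].
  rewrite density_measureE integral_indic //; last exact: measurable_preimage.
  rewrite setIC; apply: eq_trans (indepZE _ mC) _.
  by transitivity ((fine (Pr E))%:E * P C)%E; first rewrite fineK // muleC.
by rewrite ge0_integral_mscale //= fineK.
Qed.

Lemma integral_indep_event d dV (T : measurableType d) (V : measurableType dV)
    (R : realType) (Pr : probability T R) (P : {measure set V -> \bar R})
    (Z : T -> V) (E : set T) (B : set V) :
  measurable_fun setT Z -> measurable E -> measurable B ->
  (forall C, measurable C -> Pr (Z @^-1` C `&` E) = (P C * Pr E)%E) ->
  forall f : V -> \bar R, (forall y, (0 <= f y)%E) -> measurable_fun setT f ->
  (\int[Pr]_(x in Z @^-1` B `&` E) f (Z x) = Pr E * \int[P]_(y in B) f y)%E.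
Proof.
move=> mZ mE mB indepZE f f0 mf.
rewrite [LHS]integral_mkcond [in RHS]integral_mkcond.
rewrite -(integral_indep_event_indic mZ mE indepZE); last 2 first.
- exact: erestrict_ge0 (fun y _ => f0 y).
- by apply/(measurable_restrictT _ mB); exact: measurable_funTS.
apply: eq_integral => x _; rewrite /patch indicE in_setI.
by case: (x \in E); rewrite ?andbT ?andbF ?mule1 ?mule0.
Qed.

Section measurable_inv.
Import numFieldNormedType.Exports.

Lemma measurable_inv (R : realType) : measurable_fun setT (@GRing.inv R).
Proof.
have m0 : measurable [set (0 : R)] by exact: measurable_set1.
rewrite -(setUv [set (0 : R)]); apply/measurable_funU => //; first exact: measurableC.
split.
  move=> _ B mB; have [B0|B0] := pselect (B 0^-1).
    by rewrite (_ : _ `&` _ = [set 0]) //; apply/seteqP; split => x /= [->].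
  by rewrite (_ : _ `&` _ = set0) //; apply/seteqP; split => x //= [->].
apply: open_continuous_measurable_fun; first by rewrite openC; exact: closed_eq.
by move=> x /set_mem /eqP x0; exact: inv_continuous.
Qed.

End measurable_inv.

Lemma measurable_funV d (T : measurableType d) (R : realType) (f : T -> R) :
  measurable_fun setT f -> measurable_fun setT (fun x => (f x)^-1).
Proof. by move=> mf; apply: measurableT_comp mf; exact: measurable_inv. Qed.

Section tuple_rectangles.
Context d (T : measurableType d) (k : nat).

Definition rect (A : 'I_k -> set T) : set (k.-tuple T) :=
  [set z | forall i, A i (tnth z i)].

Definition rects : set (set (k.-tuple T)) :=
  [set rect A | A in [set A | forall i, measurable (A i)]].

Lemma rect_measurable A : (forall i, measurable (A i)) -> measurable (rect A).
Proof.
move=> mA; have -> : rect A = \bigcap_(i in setT) ((@tnth k T)^~ i @^-1` A i).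
  by apply/seteqP; split => z /= Az i; [move=> _|]; apply: Az.
apply: fin_bigcap_measurable => // i _.
by rewrite -[X in measurable X]setTI; exact: measurable_tnth.
Qed.

Lemma tuple_measurable_rects : @measurable _ (k.-tuple T) = <<s rects >>.
Proof.
apply/seteqP; split; last first.
  apply: smallest_sub; first exact: sigma_algebra_measurable.
  by move=> _ [A mA <-]; exact: rect_measurable.
apply: smallest_sub; first exact: smallest_sigma_algebra.
move=> C; rewrite -bigcup_seq /= => -[i _ [B mB <-]]; apply: sub_sigma_algebra.
exists (fun j => if j == i then B else setT); first by move=> j /=; case: eqP.
apply/seteqP; split => z /=; first by move=> Bz; split => //; have := Bz i; rewrite eqxx.
by move=> [_ Bz] j; case: eqP => // ->.
Qed.

Lemma tuple_measure_unique (R : realType) (m1 m2 : {measure set (k.-tuple T) -> \bar R}) :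
  (forall A, (forall i, measurable (A i)) -> m1 (rect A) = m2 (rect A)) ->
  (m1 setT < +oo)%E -> forall B, measurable B -> m1 B = m2 B.
Proof.
move=> m12 m1_fin B mB.
have rectT : rect (fun=> setT) = setT by apply/seteqP; split.
apply: (measure_unique rects (fun=> setT)) => //.
- exact: tuple_measurable_rects.
- move=> _ _ [A mA <-] [C mC <-]; exists (fun i => A i `&` C i).
    by move=> i; exact: measurableI.
  apply/seteqP; split => z /=; first by move=> ACz; split => i; case: (ACz i).
  by move=> [Az Cz] i; split; [exact: Az|exact: Cz].
- by move=> _; exists (fun=> setT); rewrite //= rectT.
- by rewrite bigcup_const.
- by move=> _ [A mA <-]; exact: m12.
Qed.

Definition permute_tuple (p : 'S_k) (z : k.-tuple T) : k.-tuple T :=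
  [tuple tnth z (p i) | i < k].

Lemma tnth_permute_tuple p z i : tnth (permute_tuple p z) i = tnth z (p i).
Proof. exact: tnth_mktuple. Qed.

Lemma measurable_permute_tuple p : measurable_fun setT (permute_tuple p).
Proof.
apply/measurable_fun_tnthP => i.
rewrite (_ : _ \o _ = (@tnth _ T)^~ (p i)); first exact: measurable_tnth.
by apply/funext => z /=; rewrite tnth_permute_tuple.
Qed.

Lemma permute_tuple_preimage_rect p A :
  permute_tuple p @^-1` rect A = rect (fun i => A ((p^-1)%g i)).
Proof.
apply/seteqP; split => z /= Az i.
  by have := Az ((p^-1)%g i); rewrite tnth_permute_tuple permKV.
by rewrite tnth_permute_tuple; have := Az (p i); rewrite permK.
Qed.

End tuple_rectangles.

Definition data_tuple (T : Type) (n : nat) (zc : 'I_n -> T) (zt : T) : (n.+1).-tuple T :=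
  [tuple of zt :: [tuple zc i | i < n]].

Lemma tnth_data_tuple0 T n (zc : 'I_n -> T) zt : tnth (data_tuple zc zt) ord0 = zt.
Proof. by []. Qed.

Lemma tnth_data_tupleS T n (zc : 'I_n -> T) zt i :
  tnth (data_tuple zc zt) (lift ord0 i) = zc i.
Proof. by rewrite tnthS tnth_mktuple. Qed.

Section oracle_threshold.
Context {R : realType} {d1 d2 : measure_display}
  {X : measurableType d1} {Y : measurableType d2}.
Variables (w s : X -> R) (loss : X -> Y -> R) (gamma : R) (n : nat).
Hypotheses (w_gt0 : forall x, 0 < w x) (loss01 : forall x y, 0 <= loss x y <= 1).

Local Notation T := (X * Y)%type.
Implicit Types z : (n.+1).-tuple T.

(* The test point sits at index 0; [selected k z] means s_k <= T (see [selectedE])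
   and [share k z] is h_k, which is 0 when no risk is selected since [x / 0 = 0]. *)
Definition weight k z := w (tnth z k).1.
Definition risk k z := loss (tnth z k).1 (tnth z k).2.
Definition score k z := s (tnth z k).1.

Definition total_weight z := \sum_(k < n.+1) weight k z.
Definition weighted_risk_below (t : \bar R) z :=
  \sum_(k < n.+1) weight k z * risk k z * ((score k z)%:E <= t)%E%:R.
Definition selected k z : bool :=
  weighted_risk_below (score k z)%:E z <= gamma * total_weight z.
Definition selected_risk z :=
  \sum_(k < n.+1) weight k z * risk k z * (selected k z)%:R.
Definition share k z := risk k z * (selected k z)%:R / selected_risk z.

Lemma weight_ge0 k z : 0 <= weight k z.
Proof. exact/ltW/w_gt0. Qed.

Lemma risk_ge0 k z : 0 <= risk k z.
Proof. by case/andP: (loss01 (tnth z k).1 (tnth z k).2). Qed.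

Lemma total_weight_gt0 z : 0 < total_weight z.
Proof.
by rewrite /total_weight big_ord_recl ltr_wpDr ?w_gt0 ?sumr_ge0 // => i _; exact: weight_ge0.
Qed.

Lemma selected_risk_ge0 z : 0 <= selected_risk z.
Proof.
by apply: sumr_ge0 => k _; rewrite !mulr_ge0 ?ler0n ?weight_ge0 ?risk_ge0.
Qed.

Lemma share_ge0 k z : 0 <= share k z.
Proof. by rewrite !mulr_ge0 ?ler0n ?risk_ge0 ?invr_ge0 ?selected_risk_ge0. Qed.

Lemma sum_weight_share z : \sum_(k < n.+1) weight k z * share k z <= 1.
Proof.
have -> : \sum_(k < n.+1) weight k z * share k z = selected_risk z / selected_risk z.
  by rewrite /selected_risk mulr_suml; apply: eq_bigr => k _; rewrite !mulrA.
by have [->|D0] := eqVneq (selected_risk z) 0; rewrite ?mul0r ?divff.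
Qed.

Lemma le_weighted_risk_below z t t' :
  (t <= t')%E -> weighted_risk_below t z <= weighted_risk_below t' z.
Proof.
move=> tt'; apply: ler_sum => k _; apply: ler_wpM2l.
  by rewrite mulr_ge0 ?weight_ge0 ?risk_ge0.
have [/le_trans/(_ tt') ->|_] := boolP ((score k z)%:E <= t)%E; first by [].
by rewrite ler0n.
Qed.

Section permutation.
Variable p : 'S_n.+1.

Let sum_perm (F : 'I_n.+1 -> R) : \sum_(k < n.+1) F (p k) = \sum_(k < n.+1) F k.
Proof. by rewrite [RHS](reindex_inj (@perm_inj _ p)). Qed.

Lemma share_permute_tuple k z : share k (permute_tuple p z) = share (p k) z.
Proof.
have tot : total_weight (permute_tuple p z) = total_weight z.
  rewrite /total_weight -(sum_perm (weight^~ z)); apply: eq_bigr => i _.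
  by rewrite /weight tnth_permute_tuple.
have sel i : selected i (permute_tuple p z) = selected (p i) z.
  rewrite /selected tot /weighted_risk_below; congr (_ <= _).
  rewrite -[RHS]sum_perm; apply: eq_bigr => m _.
  by rewrite /weight /risk /score !tnth_permute_tuple.
rewrite /share /selected_risk sel /risk tnth_permute_tuple; congr (_ / _).
rewrite -[RHS]sum_perm; apply: eq_bigr => i _.
by rewrite sel /weight /risk tnth_permute_tuple.
Qed.

End permutation.

Variables (zc : 'I_n -> X * Y) (zt : X * Y).

Local Notation tz := (data_tuple zc zt).
Local Notation L := (loss zt.1 zt.2).

Lemma wsumE : wsum w zc zt = total_weight tz.
Proof.
rewrite /total_weight big_ord_recl /wsum addrC; congr (_ + _).
by apply: eq_bigr => i _; rewrite /weight tnth_data_tupleS.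
Qed.

Lemma numerE t : numer w s loss zc zt t L = weighted_risk_below t tz.
Proof.
rewrite /numer /weighted_risk_below big_ord_recl [RHS]addrC; congr (_ + _).
  apply: eq_bigr => i _; rewrite /weight /risk /score tnth_data_tupleS /wc /Lc /ind.
  by case: ifP.
by rewrite /weight /risk /score tnth_data_tuple0 /wt /ind; case: ifP.
Qed.

Lemma MsetE t : Mset s zc zt t <-> exists k, t = score k tz.
Proof.
split=> [[[i _ <-]|->]|[k ->]]; first by exists (lift ord0 i); rewrite /score tnth_data_tupleS.
  by exists ord0.
case: (unliftP ord0 k) => [i ->|->]; last by right.
by left; exists i => //; rewrite /score tnth_data_tupleS.
Qed.

Lemma FwE t : (Fw w s loss zc zt t%:E L <= gamma) =
  (weighted_risk_below t%:E tz <= gamma * total_weight tz).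
Proof. by rewrite /Fw numerE wsumE ler_pdivrMr //; exact: total_weight_gt0. Qed.

(* The selected scores are downward closed, so [t_gamma] is the largest of them. *)
Lemma selectedE k : ((score k tz)%:E <= t_gamma w s loss gamma zc zt L)%E = selected k tz.
Proof.
apply/idP/idP => [le_kt|selk]; last first.
  apply: ereal_sup_ubound; exists (score k tz) => //; split; first by apply/MsetE; exists k.
  by rewrite FwE.
apply/negPn/negP => /negP nselk.
pose b := \big[Order.max/(score k tz - 1)]_(m | selected m tz) score m tz.
have lt_bk : b < score k tz.
  apply: bigmax_lt; first by rewrite ltrBlDr ltrDl ltr01.
  move=> m selm; rewrite ltNge; apply/negP => le_km; apply: nselk.
  by apply: le_trans selm; apply: le_weighted_risk_below; rewrite lee_fin.
have le_tb : (t_gamma w s loss gamma zc zt L <= b%:E)%E.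
  apply/ereal_supP => _ [t [Mt Ft] <-]; rewrite lee_fin.
  have [m tm] := (MsetE t).1 Mt; rewrite tm FwE in Ft.
  by rewrite tm; apply: le_bigmax_cond; exact: Ft.
by have := le_trans le_kt le_tb; rewrite lee_fin leNgt lt_bk.
Qed.

Lemma selected_riskE :
  numer w s loss zc zt (t_gamma w s loss gamma zc zt L) L = selected_risk tz.
Proof. by rewrite numerE; apply: eq_bigr => k _; rewrite selectedE. Qed.

Lemma evalue_ge0 : (0 <= evalue w s loss gamma zc zt)%E.
Proof.
have w_ge0 x : 0 <= w x by exact: ltW.
have ind_ge0 x t : 0 <= ind s x t by rewrite /ind; case: ifP.
have numer_ge0 t l : 0 <= l -> 0 <= numer w s loss zc zt t l.
  move=> l0; apply: addr_ge0; last by rewrite /wt !mulr_ge0 ?ind_ge0 ?w_ge0.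
  apply: sumr_ge0 => i _; rewrite /wc /Lc !mulr_ge0 ?ind_ge0 ?w_ge0 //.
  by case/andP: (loss01 (zc i).1 (zc i).2).
rewrite /evalue; case: ifP => _ //; apply/ereal_infP => _ [l /andP[l0 _] <-].
rewrite /eterm; case: ifP => // _; case: ifP => // _.
by rewrite lee_fin divr_ge0 ?numer_ge0 // wsumE (ltW (total_weight_gt0 _)).
Qed.

Lemma risk_mul_evalue_le :
  (L%:E * evalue w s loss gamma zc zt <= (total_weight tz * share ord0 tz)%:E)%E.
Proof.
have /andP[L0 L1] := loss01 zt.1 zt.2.
have rhs_ge0 : 0 <= total_weight tz * share ord0 tz.
  by rewrite mulr_ge0 ?share_ge0 ?(ltW (total_weight_gt0 _)).
rewrite /evalue; case: ifP => _; first by rewrite mule0 lee_fin.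
apply: (@le_trans _ _ (L%:E * eterm w s loss gamma zc zt L)%E).
  apply: lee_wpmul2l; first by rewrite lee_fin.
  by apply: ereal_inf_lbound; exists L => //; rewrite /unit_interval /= L0 L1.
rewrite /eterm; case: ifP => [le_t|_]; last by rewrite mule0 lee_fin.
have sel0 : selected ord0 tz by rewrite -selectedE.
rewrite selected_riskE.
have [D0|D0] := eqVneq (selected_risk tz) 0; last first.
  by rewrite -EFinM lee_fin /share sel0 wsumE mulr1 mulrCA.
suff -> : L = 0 by rewrite mul0e lee_fin.
apply/le_anti; rewrite L0 andbT -(pmulr_rle0 _ (w_gt0 zt.1)) -D0.
rewrite /selected_risk big_ord_recl sel0 mulr1 lerDl.
by apply: sumr_ge0 => k _; rewrite !mulr_ge0 ?ler0n ?weight_ge0 ?risk_ge0.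
Qed.

End oracle_threshold.

Section oracle_threshold_measurable.
Context {R : realType} {d1 d2 : measure_display}
  {X : measurableType d1} {Y : measurableType d2}.
Variables (w s : X -> R) (loss : X -> Y -> R) (gamma : R) (n : nat).
Hypotheses (mw : measurable_fun setT w) (ms : measurable_fun setT s)
  (mloss : measurable_fun setT (fun z : X * Y => loss z.1 z.2)).

Local Notation V := ((n.+1).-tuple (X * Y)).

Let measurable_ler (f g : V -> R) : measurable_fun setT f -> measurable_fun setT g ->
  measurable_fun setT (fun z => ((f z <= g z)%R%:R : R)).
Proof.
move=> mf mg; apply: (@measurableT_comp _ _ _ _ _ _ (fun b : bool => b%:R : R)).
  by move=> _ B _.
exact: measurable_fun_ler.
Qed.

Lemma measurable_weight k : measurable_fun setT (fun z : V => weight w k z).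
Proof. exact: measurableT_comp mw (measurableT_comp measurable_fst (measurable_tnth k)). Qed.

Lemma measurable_risk k : measurable_fun setT (fun z : V => risk loss k z).
Proof. exact: measurableT_comp mloss (measurable_tnth k). Qed.

Lemma measurable_score k : measurable_fun setT (fun z : V => score s k z).
Proof. exact: measurableT_comp ms (measurableT_comp measurable_fst (measurable_tnth k)). Qed.

Lemma measurable_total_weight : measurable_fun setT (fun z : V => total_weight w z).
Proof. by apply: measurable_sum => k; exact: measurable_weight. Qed.

Lemma measurable_selected k :
  measurable_fun setT (fun z : V => (selected w s loss gamma k z)%:R : R).
Proof.
apply: measurable_ler; last exact: measurable_funM measurable_total_weight.
apply: measurable_sum => m; apply: measurable_funM.
  exact: measurable_funM (measurable_weight m) (measurable_risk m).
under eq_fun do rewrite lee_fin.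
exact: measurable_ler (measurable_score m) (measurable_score k).
Qed.

Lemma measurable_selected_risk :
  measurable_fun setT (fun z : V => selected_risk w s loss gamma z).
Proof.
apply: measurable_sum => m; apply: measurable_funM (measurable_selected m).
exact: measurable_funM (measurable_weight m) (measurable_risk m).
Qed.

Lemma measurable_share k : measurable_fun setT (fun z : V => share w s loss gamma k z).
Proof.
apply: measurable_funM.
  exact: measurable_funM (measurable_risk k) (measurable_selected k).
by apply: measurable_funV; exact: measurable_selected_risk.
Qed.

End oracle_threshold_measurable.

Section weighted_exchangeability.
Local Open Scope ereal_scope.
Context (R : realType) (d1 d2 dO : measure_display)
  (X : measurableType d1) (Y : measurableType d2)
  (Omega : measurableType dO) (Pr : probability Omega R)
  (P Q : probability (X * Y)%type R) (w : X -> R) (n : nat)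
  (Zc : 'I_n -> Omega -> X * Y) (Zt : Omega -> X * Y).
Hypotheses (mw : measurable_fun setT w) (w_gt0 : forall x, (0 < w x)%R)
  (dQdP : forall A, measurable A -> Q A = \int[P]_(z in A) (w z.1)%:E)
  (mZc : forall i, measurable_fun setT (Zc i)) (mZt : measurable_fun setT Zt)
  (lawZc : forall i A, measurable A -> Pr (Zc i @^-1` A) = P A)
  (lawZt : forall A, measurable A -> Pr (Zt @^-1` A) = Q A)
  (indep : mutually_independent Pr Zc Zt).

Local Notation T := (X * Y)%type.

Definition sample (o : Omega) := data_tuple (Zc^~ o) (Zt o).

Lemma measurable_sample : measurable_fun setT sample.
Proof.
apply: measurable_cons => //; apply/measurable_fun_tnthP => i.
by rewrite (_ : _ \o _ = Zc i) //; apply/funext => o /=; rewrite tnth_mktuple.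
Qed.

Lemma sample_preimage_rect A : sample @^-1` rect A =
  \bigcap_(i in setT) (Zc i @^-1` A (lift ord0 i)) `&` Zt @^-1` A ord0.
Proof.
apply/seteqP; split => o /= Ao.
  split; last exact: Ao ord0.
  by move=> i _; have := Ao (lift ord0 i); rewrite tnth_data_tupleS.
move=> k; case: (unliftP ord0 k) => [i ->|->]; last exact: Ao.2.
by rewrite tnth_data_tupleS; exact: Ao.1.
Qed.

Lemma prob_sample_rect A : (forall k, measurable (A k)) ->
  Pr (sample @^-1` rect A) = (\prod_(i < n) P (A (lift ord0 i))) * Q (A ord0).
Proof.
move=> mA; rewrite sample_preimage_rect indep // lawZt //; congr (_ * _).
by apply: eq_bigr => i _; exact: lawZc.
Qed.

Let update (A : 'I_n.+1 -> set T) j C k := if k == lift ord0 j then C else A k.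

Let sample_preimage_update A j C : sample @^-1` rect (update A j C) =
  Zc j @^-1` C `&` sample @^-1` rect (update A j setT).
Proof.
rewrite /update; apply/seteqP; split => o /= Ao.
  split; first by have := Ao (lift ord0 j); rewrite eqxx tnth_data_tupleS.
  by move=> k; have := Ao k; case: eqP.
move=> k; have := Ao.2 k; case: eqP => [->|//] _.
by rewrite tnth_data_tupleS; exact: Ao.1.
Qed.

Lemma weighted_sample_rect j A : (forall k, measurable (A k)) ->
  \int[Pr]_(o in sample @^-1` rect A) (w (Zc j o).1)%:E =
  Q (A ord0) * Q (A (lift ord0 j)) * \prod_(i < n | i != j) P (A (lift ord0 i)).
Proof.
move=> mA; set E := sample @^-1` rect (update A j setT).
have mupd C : measurable C -> forall k, measurable (update A j C k).
  by move=> mC k; rewrite /update; case: eqP.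
have PrE C : measurable C -> Pr (sample @^-1` rect (update A j C)) =
    P C * ((\prod_(i < n | i != j) P (A (lift ord0 i))) * Q (A ord0)).
  move=> mC; rewrite prob_sample_rect; last exact: mupd.
  rewrite (bigD1 j) //= /update eqxx muleA.
  congr (_ * _ * _); apply: eq_bigr => i ij.
  by rewrite (inj_eq lift_inj) (negbTE ij).
have mB := mA (lift ord0 j).
have mE : measurable E.
  apply: (measurable_preimage measurable_sample).
  by apply: rect_measurable; exact: mupd.
have -> : sample @^-1` rect A = Zc j @^-1` A (lift ord0 j) `&` E.
  rewrite -sample_preimage_update; congr (_ @^-1` rect _).
  by apply/funext => k; rewrite /update; case: eqP => // ->.
have indepE C : measurable C -> Pr (Zc j @^-1` C `&` E) = P C * Pr E.
  by move=> mC; rewrite -sample_preimage_update !PrE // probability_setT mul1e.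
have mw1 : measurable_fun setT (fun z : T => (w z.1)%:E).
  by apply/measurable_EFinP; exact: measurableT_comp mw measurable_fst.
rewrite (integral_indep_event (mZc j) mE mB indepE (f := fun z : T => (w z.1)%:E)) //;
  last by move=> z; rewrite lee_fin ltW.
rewrite -dQdP // PrE // probability_setT mul1e.
by rewrite [_ * Q (A ord0)]muleC muleAC.
Qed.

Lemma weighted_exchange j (F : (n.+1).-tuple T -> \bar R) :
  (forall z, 0 <= F z) -> measurable_fun setT F ->
  \int[Pr]_o (F (sample o) * (w (Zc j o).1)%:E) =
  \int[Pr]_o (F (permute_tuple (tperm ord0 (lift ord0 j)) (sample o)) * (w (Zc j o).1)%:E).
Proof.
move=> F0 mF; set s := tperm ord0 (lift ord0 j).
have mg : measurable_fun setT (fun o => w (Zc j o).1).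
  exact: measurableT_comp mw (measurableT_comp measurable_fst (mZc j)).
have g0 o : (0 <= w (Zc j o).1)%R by exact: ltW.
have mps : measurable_fun setT (permute_tuple s \o sample).
  exact: measurableT_comp (measurable_permute_tuple s) measurable_sample.
rewrite !(integral_density Pr mg g0) //; last 2 first.
- exact: measurableT_comp mF mps.
- exact: measurableT_comp mF measurable_sample.
apply: (eq_integral_pushforward measurable_sample mps) => // B mB.
pose m1 := pushforward (density_measure Pr mg g0) sample.
pose m2 := pushforward (density_measure Pr mg g0) (permute_tuple s \o sample).
change (m1 B = m2 B).
apply: (tuple_measure_unique (m1 := m1) (m2 := m2)) => //.
- exact: measurable_sample.
- move=> mS A mA.
  change (density_measure Pr mg g0 (sample @^-1` rect A) =
    density_measure Pr mg g0 ((permute_tuple s \o sample) @^-1` rect A)).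
  rewrite !density_measureE comp_preimage.
  rewrite permute_tuple_preimage_rect !weighted_sample_rect //.
  rewrite /s tpermV tpermL tpermR [Q (A ord0) * _]muleC; congr (_ * _).
  by apply: eq_bigr => i ij; rewrite tpermD // eq_sym ?neq_lift.
- move=> mS; change (density_measure Pr mg g0 (sample @^-1` setT) < +oo).
  rewrite density_measureE.
  have -> : [set: (n.+1).-tuple T] = rect (fun=> setT) by apply/seteqP; split.
  rewrite weighted_sample_rect // !probability_setT big1 ?mul1e ?ltry //.
Qed.

Section share_exchange.
Variables (s : X -> R) (loss : X -> Y -> R) (gamma : R).
Hypotheses (ms : measurable_fun setT s)
  (mloss : measurable_fun setT (fun z : T => loss z.1 z.2))
  (loss01 : forall x y, (0 <= loss x y <= 1)%R).

Local Notation share := (share w s loss gamma).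

Lemma integral_weight_share k :
  \int[Pr]_o (weight w k (sample o) * share ord0 (sample o))%:E =
  \int[Pr]_o (weight w k (sample o) * share k (sample o))%:E.
Proof.
case: (unliftP ord0 k) => [j ->|->] //.
transitivity (\int[Pr]_o ((share ord0 (sample o))%:E * (w (Zc j o).1)%:E)).
  by apply: eq_integral => o _; rewrite /weight tnth_data_tupleS EFinM muleC.
rewrite (@weighted_exchange j (fun z => (share ord0 z)%:E)); last 2 first.
- by move=> z; rewrite lee_fin (share_ge0 _ _ w_gt0 loss01).
- by apply/measurable_EFinP; apply: measurable_share.
apply: eq_integral => o _.
by rewrite share_permute_tuple tpermL /weight tnth_data_tupleS EFinM muleC.
Qed.

Lemma integral_total_weight_share_le1 :
  \int[Pr]_o (total_weight w (sample o) * share ord0 (sample o))%:E <= 1.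
Proof.
have mws k l : measurable_fun setT
    (fun o => (weight w k (sample o) * share l (sample o))%:E).
  apply/measurable_EFinP; apply: measurable_funM.
    by apply: measurableT_comp measurable_sample; apply: measurable_weight.
  by apply: measurableT_comp measurable_sample; apply: measurable_share.
have ws_ge0 k l o : 0 <= (weight w k (sample o) * share l (sample o))%:E.
  by rewrite lee_fin mulr_ge0 ?(weight_ge0 w_gt0) ?(share_ge0 _ _ w_gt0 loss01).
under eq_integral do rewrite /total_weight mulr_suml -sumEFin.
rewrite ge0_integral_sum //.
under eq_bigr do rewrite integral_weight_share.
rewrite -ge0_integral_sum //.
apply: (@le_trans _ _ (\int[Pr]_o (cst 1 o))).
  apply: ge0_le_integral_nonmeasurable => o; first by apply: sume_ge0 => k _.
  by rewrite sumEFin lee_fin sum_weight_share.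
by rewrite integral_cst // mul1e probability_le1.
Qed.

End share_exchange.

End weighted_exchangeability.

Theorem theorem6p1 (R : realType) (d1 d2 dO : measure_display)
  (X : measurableType d1) (Y : measurableType d2)
  (Omega : measurableType dO) (Pr : probability Omega R)
  (P Q : probability (X * Y)%type R)
  (w : X -> R) (s : X -> R) (loss : X -> Y -> R) (n : nat)
  (Zc : 'I_n -> Omega -> X * Y) (Zt : Omega -> X * Y) (gamma : R) :
  measurable_fun setT w -> (forall x, 0 < w x) ->
  (forall A, measurable A -> Q A = (\int[P]_(z in A) (w z.1)%:E)%E) ->
  measurable_fun setT s ->
  measurable_fun setT (fun z : X * Y => loss z.1 z.2) ->
  (forall x y, 0 <= loss x y <= 1) ->
  (forall i, measurable_fun setT (Zc i)) -> measurable_fun setT Zt ->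
  (forall i A, measurable A -> Pr (Zc i @^-1` A) = P A) ->
  (forall A, measurable A -> Pr (Zt @^-1` A) = Q A) ->
  mutually_independent Pr Zc Zt ->
  0 < gamma < 1 ->
  (\int[Pr]_(o in setT)
     ((loss (Zt o).1 (Zt o).2)%:E
      * evalue w s loss gamma (fun i => Zc i o) (Zt o)) <= 1)%E.
Proof.
move=> mw w_gt0 dQdP ms mloss loss01 mZc mZt lawZc lawZt indep _.
apply: le_trans (integral_total_weight_share_le1 mw w_gt0 dQdP mZc mZt lawZc lawZt indep
  gamma ms mloss loss01).
apply: ge0_le_integral_nonmeasurable => o.
  by rewrite mule_ge0 ?evalue_ge0 // lee_fin; case/andP: (loss01 (Zt o).1 (Zt o).2).
exact: risk_mul_evalue_le.
Qed.
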